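(* Let $V$ be a vector space of dimension $n\ge3$ over $\mathbb{F}_q$, let $w$ be a $1$-subspace (point) and $H$ a hyperplane of $V$ with $w\le H$. Let $\Delta^{(1)}$ be the set of $1$-subspaces of $V$ not contained in $H$ and $\Delta^{(2)}$ the set of hyperplanes of $V$ not containing $w$. Let $\Gamma$ be the bipartite graph with vertex set $\Delta^{(1)}\cup\Delta^{(2)}$ in which a point $p\in\Delta^{(1)}$ is adjacent to a hyperplane $K\in\Delta^{(2)}$ iff $p\le K$. Then $\Gamma$ is geodesic-transitive.
   Context: A geodesic of length $\ell$ is a vertex sequence $(v_0,\dots,v_\ell)$ with consecutive vertices adjacent and $d(v_0,v_\ell)=\ell$; a graph is geodesic-transitive if its automorphism group is transitive on geodesics of each length. (This graph is a distance-transitive antipodal $q$-cover of $K_{q^{n-2},q^{n-2}}$ of diameter $4$.) *)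

From HB Require Import structures.
From mathcomp Require Import all_boot all_order all_algebra all_fingroup.
Set Implicit Arguments. Unset Strict Implicit. Unset Printing Implicit Defensive.
Import GRing.Theory.
Local Open Scope ring_scope.

Section Graph.
Variables (T : finType) (adj : rel T).

Definition walk_len (x y : T) (k : nat) : Prop :=
  exists s : seq T, [/\ size s = k, path adj x s & last x s = y].

(* geodesic (v_0, ..., v_l) given as v_0 = x and s = [:: v_1; ...; v_l]:
   consecutive vertices adjacent and d(v_0, v_l) = l, i.e. there is no
   walk from v_0 to v_l of length < l. *)
Definition geodesic (x : T) (s : seq T) : Prop :=
  path adj x s /\ (forall k, (k < size s)%N -> ~ walk_len x (last x s) k).

Definition graph_aut (g : {perm T}) : Prop :=
  forall u v : T, adj (g u) (g v) = adj u v.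

Definition geodesic_transitive : Prop :=
  forall (x : T) (s : seq T) (y : T) (t : seq T),
    size s = size t -> geodesic x s -> geodesic y t ->
    exists g : {perm T}, [/\ graph_aut g, g x = y & map g s = t].
End Graph.

(* V = 'rV[F]_n; a subspace is represented canonically by a square matrix A
   with <<A>>%MS = A (its row space).  W is the point w, Hm the hyperplane H. *)
Section PG.
Variables (F : finFieldType) (n : nat) (W Hm : 'M[F]_n).

Definition is_subspace (A : 'M[F]_n) : bool := (<<A>>%MS == A).

Definition in_Delta (x : 'M[F]_n + 'M[F]_n) : bool :=
  match x with
  | inl p => [&& is_subspace p, \rank p == 1%N & ~~ (p <= Hm)%MS]
  | inr K => [&& is_subspace K, \rank K == n.-1 & ~~ (W <= K)%MS]
  end.

Definition vtx := {x : 'M[F]_n + 'M[F]_n | in_Delta x}.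

Definition inc_adj_raw (x y : 'M[F]_n + 'M[F]_n) : bool :=
  match x, y with
  | inl p, inr K => (p <= K)%MS
  | inr K, inl p => (p <= K)%MS
  | _, _ => false
  end.

Definition Gamma_adj : rel vtx := fun u v => inc_adj_raw (val u) (val v).
End PG.

From HB Require Import structures.
From mathcomp Require Import all_boot all_order all_algebra all_fingroup.
From mathcomp Require Import zify.
Set Implicit Arguments. Unset Strict Implicit. Unset Printing Implicit Defensive.
Import GRing.Theory.
Local Open Scope ring_scope.

(* The orthogonality correlation A |-> A^perp, followed by a linear map sending
   the flag (H^perp, w^perp) to (w, H), is an automorphism of Gamma exchanging
   points and hyperplanes, so it suffices to move geodesics starting at points.
   Every hyperplane is at distance at most 3 from a point <c0>, hence such a
   geodesic has length at most 4, and a point at distance 4 lies on the line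
   <c0, w>.  Choosing representatives modulo H, the geodesic is a prefix of
     <c0, c2, N>,  <c0 + c2>,  <c0 + c1, c0 + c2, N>,  <c0 + c1>
   for a frame (c0, c1, c2, N): c1 spans w, H = <c1, c2, N> with dim N = n - 3,
   and V = <c0, H>.  Any two frames are exchanged by an element of GL(V) fixing
   w and H, and such an element acts on Gamma as an automorphism. *)

Section RowSpaces.
Variables (F : fieldType) (n : nat).
Implicit Types (K : 'M[F]_n) (u v : 'rV[F]_n).

Lemma eqmx_sub_rank m1 m2 (A : 'M[F]_(m1, n)) (B : 'M[F]_(m2, n)) :
  (A <= B)%MS -> (\rank B <= \rank A)%N -> (A == B)%MS.
Proof. by move=> sAB rBA; rewrite -(mxrank_leqif_eq sAB).2 eqn_leq mxrankS. Qed.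

Lemma submxDr m (A : 'M[F]_(m, n)) u v :
  (u <= A)%MS -> ((u + v)%R <= A)%MS = (v <= A)%MS.
Proof.
move=> uA; apply/idP/idP => [uvA|vA]; last exact: addmx_sub.
by rewrite -(addKr u v) addmx_sub // eqmx_opp.
Qed.

Lemma submxBr m (A : 'M[F]_(m, n)) u v :
  (v <= A)%MS -> ((u - v)%R <= A)%MS = (u <= A)%MS.
Proof. by move=> vA; rewrite addrC submxDr // eqmx_opp. Qed.

Lemma notsub_capmx0 m1 m2 (A : 'M[F]_(m1, n)) (B : 'M[F]_(m2, n)) u :
  (A :&: B)%MS = 0 -> (u <= A)%MS -> u != 0 -> ~~ (u <= B)%MS.
Proof. by move=> AB0 uA; apply: contraNN => uB; rewrite -submx0 -AB0 sub_capmx uA. Qed.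

Lemma rank1_eqmx m1 m2 (A : 'M[F]_(m1, n)) (P : 'M[F]_(m2, n)) :
  (A <= P)%MS -> A != 0 -> \rank P = 1%N -> (A :=: P)%MS.
Proof.
move=> sAP A0 rP; apply/eqmxP/eqmx_sub_rank => //.
by rewrite rP lt0n mxrank_eq0.
Qed.

Lemma nz_row_rank1 m (P : 'M[F]_(m, n)) : \rank P = 1%N -> (nz_row P :=: P)%MS.
Proof.
move=> rP; have P0 : P != 0 by rewrite -mxrank_eq0 rP.
by apply: rank1_eqmx (nz_row_sub P) _ rP; rewrite nz_row_eq0.
Qed.

Lemma mxrank_adds_rank1 m1 m2 (P : 'M[F]_(m1, n)) (A : 'M[F]_(m2, n)) :
  \rank P = 1%N -> ~~ (P <= A)%MS -> \rank (P + A)%MS = (\rank A).+1.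
Proof.
move=> rP PA; have := mxrank_sum_cap P A; rewrite rP.
suff -> : \rank (P :&: A)%MS = 0%N by rewrite addn0 add1n.
apply/eqP; rewrite mxrank_eq0; apply: contraNT PA => PA0.
by rewrite -(rank1_eqmx (capmxSl P A) PA0 rP) capmxSr.
Qed.

Lemma rank_rV_notsub m v (A : 'M[F]_(m, n)) : ~~ (v <= A)%MS -> \rank v = 1%N.
Proof. by rewrite rank_rV; case: eqP => // ->; rewrite sub0mx. Qed.

Lemma mxrank_adds_row m v (A : 'M[F]_(m, n)) :
  ~~ (v <= A)%MS -> \rank (v + A)%MS = (\rank A).+1.
Proof. by move=> vA; apply: mxrank_adds_rank1 (rank_rV_notsub vA) vA. Qed.

Lemma mxrank_adds_hyperplane m K (A : 'M[F]_(m, n)) :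
  \rank K = n.-1 -> ~~ (A <= K)%MS -> \rank (A + K)%MS = n.
Proof.
move=> rK AK; have [leKAK] := mxrank_leqif_sup (addsmxSr A K).
rewrite addsmx_sub (negbTE AK) => /negbT neKAK.
have := rank_leq_col (A + K)%MS; lia.
Qed.

Lemma mxrank_cap_hyperplane m K (A : 'M[F]_(m, n)) :
  \rank K = n.-1 -> ~~ (A <= K)%MS -> \rank (A :&: K)%MS = (\rank A).-1.
Proof.
move=> rK AK; have := mxrank_sum_cap A K; rewrite mxrank_adds_hyperplane // rK.
have := rank_leq_col A; lia.
Qed.

End RowSpaces.

Section LinearMaps.
Variables (F : fieldType) (n : nat).
Implicit Types A B : 'M[F]_n.

Lemma unitmx_map_frame k (C C' : 'M[F]_(k, n)) (N N' : 'M[F]_n) :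
  \rank (C + N)%MS = n -> (k + \rank N)%N = n ->
  \rank (C' + N')%MS = n -> (k + \rank N')%N = n ->
  exists g : 'M[F]_n, [/\ g \in unitmx, C *m g = C' & (N *m g :=: N')%MS].
Proof.
move=> rCN kN rCN' kN'; have eqrN : \rank N' = \rank N by lia.
pose B := col_mx C (row_base N).
pose B' := col_mx C' (castmx (eqrN, erefl n) (row_base N')).
have eqB : (B :=: C + N)%MS.
  exact: eqmx_trans (eqmx_sym (addsmxE _ _)) (adds_eqmx (eqmx_refl C) (eq_row_base N)).
have eqB' : (B' :=: C' + N')%MS.
  apply: eqmx_trans (eqmx_sym (addsmxE _ _)) (adds_eqmx (eqmx_refl C') _).
  exact: eqmx_trans (eqmx_cast _ _) (eq_row_base N').
have freeB : row_free B by rewrite /row_free eqB rCN; lia.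
exists (pinvmx B *m B'); set g := pinvmx B *m B'.
have BgB' : B *m g = B' by rewrite mulmxA mulmxVp // mul1mx.
have /eq_col_mx[-> eqNg] := etrans (esym (mul_col_mx _ _ g)) BgB'.
split=> //.
  rewrite -row_full_unit /row_full eqn_leq rank_leq_col /=.
  by rewrite -{1}rCN' -eqB' -BgB' mxrankM_maxr.
apply: eqmx_trans (eqmxMr _ (eqmx_sym (eq_row_base N))) _.
by rewrite eqNg; apply: eqmx_trans (eqmx_cast _ _) (eq_row_base N').
Qed.

Lemma flag_frame (P Q : 'M[F]_n) :
  \rank P = 1%N -> \rank Q = n.-1 -> (P <= Q)%MS ->
  [/\ \rank (col_mx (nz_row P) (nz_row (Q^C)%MS) + (Q :\: P))%MS = n,
      (2 + \rank (Q :\: P))%N = n & (nz_row P + (Q :\: P) :=: Q)%MS].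
Proof.
move=> rP rQ PQ; set a := nz_row P; set b := nz_row (Q^C)%MS; set D := (Q :\: P)%MS.
have n2 : (2 <= n)%N by have := mxrankS PQ; rewrite rP rQ; lia.
have eqaP : (a :=: P)%MS := nz_row_rank1 rP.
have a0 : a != 0 by rewrite -mxrank_eq0 eqaP rP.
have rD : (2 + \rank D)%N = n.
  by have := mxrank_cap_compl Q P; rewrite (capmx_idPr PQ) rP rQ -/D; lia.
have aD : ~~ (a <= D)%MS.
  by apply: (notsub_capmx0 (A := P)) a0; rewrite ?eqaP // capmxC capmx_diff.
have eqaDQ : (a + D :=: Q)%MS.
  apply/eqmxP/eqmx_sub_rank; first by rewrite addsmx_sub diffmxSl eqaP PQ.
  by rewrite mxrank_adds_row // rQ; lia.
have b0 : b != 0 by rewrite nz_row_eq0 -mxrank_eq0 mxrank_compl rQ; lia.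
have bQ : ~~ (b <= a + D)%MS.
  rewrite eqaDQ; apply: (notsub_capmx0 (A := (Q^C)%MS)) b0; last exact: nz_row_sub.
  by rewrite capmxC capmx_compl.
split=> //.
rewrite (adds_eqmx (eqmx_sym (addsmxE _ _)) (eqmx_refl _)).
by rewrite (addsmxC a b) -addsmxA mxrank_adds_row // eqaDQ rQ; lia.
Qed.

Lemma unitmx_map_flag (P Q P' Q' : 'M[F]_n) :
  \rank P = 1%N -> \rank Q = n.-1 -> (P <= Q)%MS ->
  \rank P' = 1%N -> \rank Q' = n.-1 -> (P' <= Q')%MS ->
  exists g : 'M[F]_n, [/\ g \in unitmx, (P *m g :=: P')%MS & (Q *m g :=: Q')%MS].
Proof.
move=> rP rQ PQ rP' rQ' PQ'.
have [rC kN eqQ] := flag_frame rP rQ PQ; have [rC' kN' eqQ'] := flag_frame rP' rQ' PQ'.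
have [g [gU]] := unitmx_map_frame rC kN rC' kN'.
rewrite mul_col_mx => /eq_col_mx[eqPg _] eqNg; exists g; split=> //.
  apply: eqmx_trans (eqmxMr g (eqmx_sym (nz_row_rank1 rP))) _.
  by rewrite eqPg; exact: nz_row_rank1.
apply: eqmx_trans (eqmxMr g (eqmx_sym eqQ)) _.
apply: eqmx_trans (addsmxMr _ _ _) _; rewrite eqPg.
exact: eqmx_trans (adds_eqmx (eqmx_refl _) eqNg) eqQ'.
Qed.

Lemma addsmxMr_eqmx m1 m2 m1' m2' (A : 'M[F]_(m1, n)) (B : 'M[F]_(m2, n))
    (A' : 'M[F]_(m1', n)) (B' : 'M[F]_(m2', n)) (g : 'M[F]_n) :
  (A *m g :=: A')%MS -> (B *m g :=: B')%MS -> ((A + B)%MS *m g :=: A' + B')%MS.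
Proof. by move=> eA eB; apply: eqmx_trans (addsmxMr _ _ _) (adds_eqmx eA eB). Qed.

Lemma genmx_mulmx m (A : 'M[F]_(m, n)) (g : 'M[F]_n) : <<<<A>>%MS *m g>>%MS = <<A *m g>>%MS.
Proof. exact: eq_genmx (eqmxMr g (genmxE A)). Qed.

Definition orthmx (A : 'M[F]_n) : 'M[F]_n := kermx A^T.

Lemma mxrank_orthmx A : \rank (orthmx A) = (n - \rank A)%N.
Proof. by rewrite mxrank_ker mxrank_tr. Qed.

Lemma orthmxS A B : (A <= B)%MS -> (orthmx B <= orthmx A)%MS.
Proof.
case/submxP=> X ->; apply/sub_kermxP.
by rewrite trmx_mul mulmxA (sub_kermxP (submx_refl _)) mul0mx.
Qed.

Lemma orthmxK A : (orthmx (orthmx A) :=: A)%MS.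
Proof.
apply/eqmx_sym/eqmxP/eqmx_sub_rank; last by rewrite !mxrank_orthmx; have := rank_leq_col A; lia.
apply/sub_kermxP; rewrite -(trmxK A) -trmx_mul trmxK.
by rewrite (sub_kermxP (submx_refl _)) trmx0.
Qed.

Lemma orthmx_sub A B : (orthmx B <= orthmx A)%MS = (A <= B)%MS.
Proof. by apply/idP/idP=> [/orthmxS|/orthmxS //]; rewrite !orthmxK. Qed.

End LinearMaps.

Section GraphAutomorphisms.
Variables (T : finType) (adj : rel T).
Implicit Types (g h : {perm T}) (x y : T) (s : seq T).

Lemma graph_autV g : graph_aut adj g -> graph_aut adj g^-1.
Proof. by move=> autg u v; rewrite -autg !permKV. Qed.

Lemma graph_autM g h : graph_aut adj g -> graph_aut adj h -> graph_aut adj (g * h).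
Proof. by move=> autg auth u v; rewrite !permM auth autg. Qed.

Lemma graph_aut_path g x s : graph_aut adj g -> path adj (g x) (map g s) = path adj x s.
Proof. by move=> autg; elim: s x => //= y s IHs x; rewrite autg IHs. Qed.

Lemma graph_aut_walk g x y k :
  graph_aut adj g -> walk_len adj x y k -> walk_len adj (g x) (g y) k.
Proof.
move=> autg [s [<- pxs <-]]; exists (map g s).
by rewrite size_map graph_aut_path // last_map.
Qed.

Lemma geodesic_aut g x s :
  graph_aut adj g -> geodesic adj x s -> geodesic adj (g x) (map g s).
Proof.
move=> autg [pxs short]; split; first by rewrite graph_aut_path.
move=> k; rewrite size_map last_map => lt_ks /(graph_aut_walk (graph_autV autg)).
by rewrite !permK; apply: short.
Qed.

Lemma geodesic_take x s m : geodesic adj x s -> geodesic adj x (take m s).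
Proof.
rewrite -{1}(cat_take_drop m s) /geodesic cat_path => -[/andP[ptake pdrop] short].
split=> // k lt_k [w [sw pw lw]]; apply: (short (k + size (drop m s))%N).
  by move: lt_k; rewrite size_cat size_drop size_take; case: ltnP; lia.
by exists (w ++ drop m s); rewrite size_cat sw cat_path pw lw pdrop last_cat lw -last_cat.
Qed.

Lemma walk_len_rcons x y z k : walk_len adj x y k -> adj y z -> walk_len adj x z k.+1.
Proof.
by move=> [s [<- pxs <-]] yz; exists (rcons s z); rewrite size_rcons rcons_path pxs yz last_rcons.
Qed.

Lemma geodesic_last_neq x s : geodesic adj x s -> (0 < size s)%N -> last x s != x.
Proof.
by move=> [_ short] s_gt0; apply/eqP=> eq_x; apply: (short 0%N s_gt0); exists [::]; rewrite eq_x.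
Qed.

Lemma geodesic_last_nadj x s : geodesic adj x s -> (1 < size s)%N -> ~~ adj x (last x s).
Proof.
move=> [_ short] s_gt1; apply/negP=> adj_x; apply: (short 1%N s_gt1).
by exists [:: last x s]; rewrite /= adj_x.
Qed.

Lemma geodesic_transitive_from (P : pred T) :
  (forall x, exists2 g, graph_aut adj g & P (g x)) ->
  (forall x s y t, P x -> P y -> size s = size t -> geodesic adj x s -> geodesic adj y t ->
     exists g, [/\ graph_aut adj g, g x = y & map g s = t]) ->
  geodesic_transitive adj.
Proof.
move=> toP transP x s y t st geo_s geo_t.
have [gx autgx Px] := toP x; have [gy autgy Py] := toP y.
have [g [autg gxy gst]] := transP _ _ _ _ Px Py
  (etrans (size_map _ _) (etrans st (esym (size_map _ _))))
  (geodesic_aut autgx geo_s) (geodesic_aut autgy geo_t).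
exists (gx * g * gy^-1)%g; split.
- exact: graph_autM (graph_autM autgx autg) (graph_autV autgy).
- by rewrite !permM gxy permK.
rewrite -[t](mapK (permK gy)) -gst -!map_comp; apply: eq_map => z.
by rewrite /= !permM.
Qed.

End GraphAutomorphisms.

Section InducedAutomorphism.
Variables (F : finFieldType) (n : nat) (W Hm : 'M[F]_n).
Variable phi : 'M[F]_n + 'M[F]_n -> 'M[F]_n + 'M[F]_n.
Hypothesis phi_Delta : forall x, in_Delta W Hm x -> in_Delta W Hm (phi x).
Hypothesis phi_inj : forall x y, in_Delta W Hm x -> in_Delta W Hm y -> phi x = phi y -> x = y.
Hypothesis phi_adj : forall x y, in_Delta W Hm x -> in_Delta W Hm y ->
  inc_adj_raw (phi x) (phi y) = inc_adj_raw x y.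

Definition induced_vtx (v : vtx W Hm) : vtx W Hm := exist _ (phi (val v)) (phi_Delta (valP v)).

Lemma induced_vtx_inj : injective induced_vtx.
Proof. by move=> u v /(congr1 val)/phi_inj eq_uv; apply/val_inj/eq_uv; apply: valP. Qed.

Definition induced_perm : {perm vtx W Hm} := perm induced_vtx_inj.

Lemma induced_permE v : val (induced_perm v) = phi (val v).
Proof. by rewrite permE. Qed.

Lemma induced_perm_aut : graph_aut (@Gamma_adj F n W Hm) induced_perm.
Proof. by move=> u v; rewrite /Gamma_adj !induced_permE phi_adj ?(valP u) ?(valP v). Qed.

End InducedAutomorphism.

Section GammaAutomorphisms.
Variables (F : finFieldType) (n : nat) (W Hm : 'M[F]_n).
Implicit Types A B : 'M[F]_n.

Lemma is_subspace_genmx m (A : 'M[F]_(m, n)) : is_subspace <<A>>%MS.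
Proof. by rewrite /is_subspace genmx_id. Qed.

Lemma is_subspace_eq A B : is_subspace A -> is_subspace B -> (A == B)%MS -> A = B.
Proof. by move=> /eqP eA /eqP eB /genmxP; rewrite eA eB. Qed.

Lemma is_subspace_genmxE A m (B : 'M[F]_(m, n)) : is_subspace A -> (A == B)%MS -> A = <<B>>%MS.
Proof. by move=> sA /genmxP <-; rewrite (eqP sA). Qed.

Lemma genmx_mulmx_inj g A B :
  g \in unitmx -> <<A *m g>>%MS = <<B *m g>>%MS -> (A == B)%MS.
Proof. by move=> gU /genmxP; rewrite !submxMfree ?row_free_unit. Qed.

Section Collineation.
Variable g : 'M[F]_n.
Hypotheses (gU : g \in unitmx) (gW : (W *m g :=: W)%MS) (gH : (Hm *m g :=: Hm)%MS).

Definition collineation (x : 'M[F]_n + 'M[F]_n) :=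
  match x with inl p => inl <<p *m g>>%MS | inr K => inr <<K *m g>>%MS end.

Let g_free : row_free g. Proof. by rewrite row_free_unit. Qed.

Lemma collineation_Delta x : in_Delta W Hm x -> in_Delta W Hm (collineation x).
Proof.
case: x => [p|K] /and3P[_ /eqP rx notsub] /=;
  rewrite is_subspace_genmx mxrank_gen mxrankMfree // rx eqxx genmxE.
  by rewrite -gH submxMfree.
by rewrite -{1}gW submxMfree.
Qed.

Lemma collineation_inj x y : in_Delta W Hm x -> in_Delta W Hm y ->
  collineation x = collineation y -> x = y.
Proof.
case: x y => [p|K] [q|L] /and3P[sx _ _] /and3P[sy _ _] //= [] /(genmx_mulmx_inj gU) eq_xy.
  by rewrite (is_subspace_eq sx sy eq_xy).
by rewrite (is_subspace_eq sx sy eq_xy).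
Qed.

Lemma collineation_adj x y : in_Delta W Hm x -> in_Delta W Hm y ->
  inc_adj_raw (collineation x) (collineation y) = inc_adj_raw x y.
Proof. by case: x y => [p|K] [q|L] //= _ _; rewrite !genmxE submxMfree. Qed.

Definition collineation_perm := induced_perm collineation_Delta collineation_inj.

Lemma collineation_permE v : val (collineation_perm v) = collineation (val v).
Proof. exact: induced_permE. Qed.

Lemma collineation_perm_aut : graph_aut (@Gamma_adj F n W Hm) collineation_perm.
Proof. exact: induced_perm_aut collineation_adj. Qed.

End Collineation.

Section Correlation.
Hypothesis rW : \rank W = 1%N.
Variable g : 'M[F]_n.
Hypotheses (gU : g \in unitmx) (gW : (orthmx Hm *m g :=: W)%MS) (gH : (orthmx W *m g :=: Hm)%MS).

Definition correlation (x : 'M[F]_n + 'M[F]_n) :=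
  match x with
  | inl p => inr <<orthmx p *m g>>%MS
  | inr K => inl <<orthmx K *m g>>%MS
  end.

Let g_free : row_free g. Proof. by rewrite row_free_unit. Qed.

Lemma correlation_Delta x : in_Delta W Hm x -> in_Delta W Hm (correlation x).
Proof.
have n_gt0 : (0 < n)%N by rewrite -rW rank_leq_col.
case: x => [p|K] /and3P[_ /eqP rx notsub] /=;
  rewrite is_subspace_genmx mxrank_gen mxrankMfree // mxrank_orthmx rx genmxE.
  by rewrite -gW submxMfree // orthmx_sub notsub subn1 eqxx.
by rewrite -gH submxMfree // orthmx_sub notsub; apply/eqP; lia.
Qed.

Lemma correlation_inj x y : in_Delta W Hm x -> in_Delta W Hm y ->
  correlation x = correlation y -> x = y.
Proof.
case: x y => [p|K] [q|L] /and3P[sx _ _] /and3P[sy _ _] //= [] /(genmx_mulmx_inj gU).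
  by rewrite !orthmx_sub andbC => /(is_subspace_eq sx sy) ->.
by rewrite !orthmx_sub andbC => /(is_subspace_eq sx sy) ->.
Qed.

Lemma correlation_adj x y : in_Delta W Hm x -> in_Delta W Hm y ->
  inc_adj_raw (correlation x) (correlation y) = inc_adj_raw x y.
Proof. by case: x y => [p|K] [q|L] //= _ _; rewrite !genmxE submxMfree // orthmx_sub. Qed.

Definition correlation_perm := induced_perm correlation_Delta correlation_inj.

Lemma correlation_permE v : val (correlation_perm v) = correlation (val v).
Proof. exact: induced_permE. Qed.

Lemma correlation_perm_aut : graph_aut (@Gamma_adj F n W Hm) correlation_perm.
Proof. exact: induced_perm_aut correlation_adj. Qed.

End Correlation.
End GammaAutomorphisms.

Section Geometry.
Variables (F : finFieldType) (n : nat) (W Hm : 'M[F]_n).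
Hypotheses (n_ge3 : (3 <= n)%N) (rW : \rank W = 1%N) (rH : \rank Hm = n.-1).
Hypothesis WH : (W <= Hm)%MS.
Implicit Types (u v c : 'rV[F]_n) (A K : 'M[F]_n).

Local Notation vertex := (vtx W Hm).
Local Notation adj := (@Gamma_adj F n W Hm).

Lemma notsubW_notsubH m (A : 'M[F]_(m, n)) : ~~ (W <= A)%MS -> ~~ (Hm <= A)%MS.
Proof. by apply: contra; apply: submx_trans. Qed.

Lemma notsubH_notsubW m (A : 'M[F]_(m, n)) : ~~ (A <= Hm)%MS -> ~~ (A <= W)%MS.
Proof. by apply: contra => /submx_trans; apply. Qed.

Lemma exists_rep_modH m (P : 'M[F]_(m, n)) c :
  ~~ (P <= Hm)%MS -> exists2 u, (u <= P)%MS & ((u - c)%R <= Hm)%MS.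
Proof.
move=> PH; have /sub_addsmxP[[a b] /= ->] : (c <= P + Hm)%MS.
  by apply: submx_full; rewrite /row_full mxrank_adds_hyperplane.
by exists (a *m P); rewrite ?submxMl // opprD addrA subrr add0r eqmx_opp submxMl.
Qed.

Lemma addsW_capH m (P : 'M[F]_(m, n)) :
  \rank P = 1%N -> ~~ (P <= Hm)%MS -> ((P + W) :&: Hm :=: W)%MS.
Proof.
move=> rP PH; have PWH : ~~ (P + W <= Hm)%MS by rewrite addsmx_sub negb_and PH.
apply/eqmx_sym/eqmxP/eqmx_sub_rank; first by rewrite sub_capmx addsmxSr.
rewrite mxrank_cap_hyperplane // mxrank_adds_rank1 ?rW //.
by apply: contra PH => /submx_trans; apply.
Qed.

Lemma mxrank_capH_hyperplane K :
  \rank K = n.-1 -> ~~ (W <= K)%MS -> (2 + \rank (Hm :&: K))%N = n.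
Proof. by move=> rK WK; rewrite mxrank_cap_hyperplane ?rH ?notsubW_notsubH //; lia. Qed.

Lemma capH_hyperplane_neq0 K : \rank K = n.-1 -> ~~ (W <= K)%MS -> (Hm :&: K)%MS != 0.
Proof. by move=> rK WK; have := mxrank_capH_hyperplane rK WK; rewrite -mxrank_eq0; lia. Qed.

Lemma notsubW_adds m (P : 'M[F]_(m, n)) u :
  \rank P = 1%N -> ~~ (P <= Hm)%MS -> ~~ (u <= P + W)%MS -> ~~ (W <= P + u)%MS.
Proof.
move=> rP PH uPW; apply: contra uPW => WPu.
have /eqmxP eqPW : (P + W == P + u)%MS.
  apply: eqmx_sub_rank; first by rewrite addsmx_sub addsmxSl.
  rewrite (mxrank_adds_rank1 (A := W)) ?rW ?(notsubH_notsubW PH) //.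
  by apply: leq_trans (mxrank_adds_leqif P u).1 _; rewrite rP add1n ltnS rank_leq_row.
by rewrite eqPW addsmxSr.
Qed.

Definition hyperplane_through m (P : 'M[F]_(m, n)) : 'M[F]_n := (P + (P + W)^C)%MS.

Lemma hyperplane_throughP m (P : 'M[F]_(m, n)) : ~~ (W <= P)%MS ->
  [/\ \rank (hyperplane_through P) = n.-1, ~~ (W <= hyperplane_through P)%MS
     & (P <= hyperplane_through P)%MS].
Proof.
rewrite /hyperplane_through => WP; set S := (P + W)%MS.
have rS : \rank S = (\rank P).+1 by rewrite /S addsmxC mxrank_adds_rank1.
have rPS : \rank (P + S^C)%MS = n.-1.
  rewrite mxrank_disjoint_sum ?mxrank_compl ?rS; first by have := rank_leq_col S; lia.
  by apply/eqP; rewrite -submx0 -(capmx_compl S) capmxS ?addsmxSl.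
split=> //; last exact: addsmxSl.
apply: contraTN (addsmx_compl_full S) => WPS; rewrite /row_full.
have : (\rank (S + S^C) <= n.-1)%N.
  by rewrite -rPS mxrankS // !addsmx_sub addsmxSl WPS addsmxSr.
lia.
Qed.

Lemma vertex_point (v : vertex) p :
  val v = inl p -> [/\ is_subspace p, \rank p = 1%N & ~~ (p <= Hm)%MS].
Proof. by move=> vp; have := valP v; rewrite vp => /and3P[? /eqP ? ?]. Qed.

Lemma vertex_hyperplane (v : vertex) K :
  val v = inr K -> [/\ is_subspace K, \rank K = n.-1 & ~~ (W <= K)%MS].
Proof. by move=> vK; have := valP v; rewrite vK => /and3P[? /eqP ? ?]. Qed.

Lemma adj_point (u v : vertex) p :
  adj u v -> val u = inl p -> exists2 K, val v = inr K & (p <= K)%MS.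
Proof. by rewrite /Gamma_adj => + up; rewrite up; case: (val v) => // K; exists K. Qed.

Lemma adj_hyperplane (u v : vertex) K :
  adj u v -> val u = inr K -> exists2 p, val v = inl p & (p <= K)%MS.
Proof. by rewrite /Gamma_adj => + uK; rewrite uK; case: (val v) => // p; exists p. Qed.

Lemma point_in_Delta u : ~~ (u <= Hm)%MS -> in_Delta W Hm (inl <<u>>%MS).
Proof.
move=> uH; have u0 : u != 0 by apply: contraNneq uH => ->; rewrite sub0mx.
by rewrite /= is_subspace_genmx mxrank_gen rank_rV u0 genmxE uH.
Qed.

Lemma hyperplane_in_Delta A :
  \rank A = n.-1 -> ~~ (W <= A)%MS -> in_Delta W Hm (inr <<A>>%MS).
Proof. by move=> rA WA; rewrite /= is_subspace_genmx mxrank_gen rA genmxE WA eqxx. Qed.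

Definition point_vertex u (uH : ~~ (u <= Hm)%MS) : vertex :=
  exist (in_Delta W Hm) _ (point_in_Delta uH).

Definition hyperplane_vertex A (rA : \rank A = n.-1) (WA : ~~ (W <= A)%MS) : vertex :=
  exist (in_Delta W Hm) _ (hyperplane_in_Delta rA WA).

Lemma vertex_pointP (v : vertex) p :
  val v = inl p -> exists2 c0 : 'rV[F]_n, p = <<c0>>%MS & ~~ (c0 <= Hm)%MS.
Proof.
move=> vp; have [sp rp pH] := vertex_point vp; have eqp := nz_row_rank1 rp.
exists (nz_row p); last by rewrite eqp.
by apply: is_subspace_genmxE sp _; apply/eqmxP/eqmx_sym.
Qed.

Lemma line_meets_hyperplane c0 K : ~~ (c0 <= Hm)%MS -> \rank K = n.-1 -> ~~ (W <= K)%MS ->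
  exists2 c1, (c1 <= W)%MS & ((c0 + W) :&: K :=: (c0 + c1)%R)%MS.
Proof.
move=> c0H rK WK; have r_c0 := rank_rV_notsub c0H; have c0WH := addsW_capH r_c0 c0H.
have rP : \rank ((c0 + W) :&: K)%MS = 1%N.
  rewrite mxrank_cap_hyperplane ?addsmx_sub ?negb_and ?WK ?orbT //.
  by rewrite mxrank_adds_row ?rW ?(notsubH_notsubW c0H).
have PH : ~~ ((c0 + W) :&: K <= Hm)%MS.
  apply: contra WK => PH; have PW : ((c0 + W) :&: K <= W)%MS.
    by rewrite -c0WH sub_capmx capmxSl.
  have /eqmxP eqPW : ((c0 + W) :&: K == W)%MS by apply: eqmx_sub_rank; rewrite ?rP ?rW.
  by rewrite -eqPW capmxSr.
have [u uP uc0H] := exists_rep_modH c0 PH.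
have u0 : u != 0 by apply: contraNneq c0H => u0; rewrite -eqmx_opp -sub0r -u0.
exists (u - c0)%R; last by rewrite addrC subrK; apply/eqmx_sym/rank1_eqmx.
by rewrite -c0WH sub_capmx uc0H submxBr ?addsmxSl ?(submx_trans uP (capmxSl _ _)).
Qed.

Lemma walk_len2_points (x y : vertex) u v : val x = inl <<u>>%MS -> val y = inl <<v>>%MS ->
  ~~ (W <= u + v)%MS -> walk_len adj x y 2.
Proof.
move=> xu yv Wuv; have [rK WK uvK] := hyperplane_throughP Wuv.
exists [:: hyperplane_vertex rK WK; y]; split=> //=.
rewrite /Gamma_adj xu yv /= !genmxE andbT.
by apply/andP; split; apply: submx_trans uvK; rewrite ?addsmxSl ?addsmxSr.
Qed.

Lemma walk_len3_point_hyperplane (x y : vertex) c0 K :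
  val x = inl <<c0>>%MS -> val y = inr K -> walk_len adj x y 3.
Proof.
move=> xc0 yK; have [_ _] := vertex_point xc0; rewrite genmxE => c0H.
have [_ rK WK] := vertex_hyperplane yK.
have [c1 c1W eqr] := line_meets_hyperplane c0H rK WK; set r := (c0 + c1)%R in eqr.
have [r_c0W rK'] : (r <= c0 + W)%MS /\ (r <= K)%MS by rewrite -!eqr capmxSl capmxSr.
set h := nz_row (Hm :&: K)%MS; have h_HK : (h <= Hm :&: K)%MS := nz_row_sub _.
have h0 : h != 0 by rewrite nz_row_eq0 capH_hyperplane_neq0.
have [hH hK] : (h <= Hm)%MS /\ (h <= K)%MS by rewrite !(submx_trans h_HK) ?capmxSl ?capmxSr.
have h_c0W : ~~ (h <= c0 + W)%MS.
  apply: contra WK => h_c0W; rewrite -(rank1_eqmx _ h0 rW) //.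
  by rewrite -(addsW_capH (rank_rV_notsub c0H) c0H) sub_capmx h_c0W.
(* [h + r] is a point of [K] off [H] and off the line [c0 + W], so some
   hyperplane through [c0] and [h + r] misses [W]. *)
have qH : ~~ ((h + r)%R <= Hm)%MS by rewrite submxDr // /r addrC submxDr // (submx_trans c1W).
have W_c0q : ~~ (W <= c0 + (h + r)%R)%MS.
  by rewrite notsubW_adds ?(rank_rV_notsub c0H) // addrC submxDr.
apply: walk_len_rcons (walk_len2_points xc0 (erefl (val (point_vertex qH))) W_c0q) _.
by rewrite /Gamma_adj yK /= genmxE addmx_sub.
Qed.

Definition is_frame c0 c1 c2 (N : 'M[F]_n) : bool :=
  [&& \rank (c0 + (c1 + (c2 + N)))%MS == n, (3 + \rank N == n)%N,
      (W == c1)%MS & (Hm == c1 + (c2 + N))%MS].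

Definition frame_path c0 c1 c2 (N : 'M[F]_n) : seq ('M[F]_n + 'M[F]_n) :=
  [:: inr <<(c0 + (c2 + N))%MS>>%MS; inl <<c0 + c2>>%MS;
      inr <<((c0 + c1)%R + ((c0 + c2)%R + N))%MS>>%MS; inl <<c0 + c1>>%MS].

Lemma is_frame_of c0 c1 c2 N K1 :
  \rank K1 = n.-1 -> ~~ (W <= K1)%MS -> (c0 <= K1)%MS -> ~~ (c0 <= Hm)%MS ->
  (c1 <= W)%MS -> c1 != 0 -> (c2 <= Hm :&: K1)%MS -> ~~ (c2 <= N)%MS ->
  (N <= Hm :&: K1)%MS -> (3 + \rank N)%N = n ->
  is_frame c0 c1 c2 N /\ (K1 == c0 + (c2 + N))%MS.
Proof.
move=> rK1 WK1 c0K1 c0H c1W c1_0 c2HK1 c2N NHK1 rN.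
have eqc1W : (c1 :=: W)%MS := rank1_eqmx c1W c1_0 rW.
have c2N_HK1 : (c2 + N <= Hm :&: K1)%MS by rewrite addsmx_sub c2HK1.
have [c2N_H c2N_K1] : (c2 + N <= Hm)%MS /\ (c2 + N <= K1)%MS.
  by rewrite !(submx_trans c2N_HK1) ?capmxSl ?capmxSr.
have c0_c2N : ~~ (c0 <= c2 + N)%MS by apply: contra c0H => /submx_trans; apply.
have c1_c2N : ~~ (c1 <= c2 + N)%MS by rewrite eqc1W; apply: contra WK1 => /submx_trans; apply.
have /eqmxP eqK1 : (c0 + (c2 + N) == K1)%MS.
  apply: eqmx_sub_rank; first by rewrite addsmx_sub c0K1.
  by rewrite !mxrank_adds_row // rK1 -[X in (X.-1 <= _)%N]rN.
have /eqmxP eqH : (c1 + (c2 + N) == Hm)%MS.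
  apply: eqmx_sub_rank; first by rewrite addsmx_sub (submx_trans c1W WH).
  by rewrite !mxrank_adds_row // rH -[X in (X.-1 <= _)%N]rN.
split; last exact/eqmxP/eqmx_sym.
apply/and4P; split; [|by rewrite rN|exact/eqmxP/eqmx_sym..].
by rewrite (adds_eqmx (eqmx_refl c0) eqH) mxrank_adds_hyperplane.
Qed.

Lemma frame_transport c0 c1 c2 N c0' c1' c2' N' :
  is_frame c0 c1 c2 N -> is_frame c0' c1' c2' N' ->
  exists g, [/\ g \in unitmx, (W *m g :=: W)%MS, (Hm *m g :=: Hm)%MS, c0 *m g = c0'
     & map (collineation g) (frame_path c0 c1 c2 N) = frame_path c0' c1' c2' N'].
Proof.
have cols (a1 a2 a3 : 'rV[F]_n) (M : 'M[F]_n) :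
    (col_mx a1 (col_mx a2 a3) + M :=: a1 + (a2 + (a3 + M)))%MS.
  apply: eqmx_trans (adds_eqmx (eqmx_sym (addsmxE _ _)) (eqmx_refl M)) _.
  apply: eqmx_trans (adds_eqmx (adds_eqmx (eqmx_refl a1) (eqmx_sym (addsmxE _ _))) (eqmx_refl M)) _.
  by rewrite -!addsmxA.
move=> /and4P[/eqP rC /eqP rN /eqmxP eqW /eqmxP eqH].
move=> /and4P[/eqP rC' /eqP rN' /eqmxP eqW' /eqmxP eqH'].
rewrite -(cols c0) in rC; rewrite -(cols c0') in rC'.
have [g [gU]] := unitmx_map_frame rC rN rC' rN'.
rewrite !mul_col_mx => /eq_col_mx[c0g /eq_col_mx[c1g c2g]] Ng; exists g; split=> //.
- by apply: eqmx_trans (eqmxMr g eqW) _; rewrite c1g; apply: eqmx_sym.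
- apply: eqmx_trans (eqmxMr g eqH) _; apply: eqmx_trans _ (eqmx_sym eqH').
  by apply: addsmxMr_eqmx; rewrite ?c1g //; apply: addsmxMr_eqmx; rewrite ?c2g.
rewrite /frame_path /= !genmx_mulmx !mulmxDl c0g c1g c2g.
by congr [:: inr _; inl _; inr _; inl _]; apply: eq_genmx;
  do !apply: addsmxMr_eqmx; rewrite ?mulmxDl ?c0g ?c1g ?c2g.
Qed.

Lemma frame_through_hyperplane_point c0 K1 c2 :
  \rank K1 = n.-1 -> ~~ (W <= K1)%MS -> (c0 <= K1)%MS -> ~~ (c0 <= Hm)%MS ->
  (c2 <= Hm :&: K1)%MS -> c2 != 0 ->
  exists c1 N, is_frame c0 c1 c2 N /\ (K1 == c0 + (c2 + N))%MS.
Proof.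
move=> rK1 WK1 c0K1 c0H c2HK1 c2_0.
have rN := mxrank_cap_compl (Hm :&: K1)%MS c2.
rewrite (capmx_idPr c2HK1) rank_rV c2_0 in rN.
exists (nz_row W), ((Hm :&: K1) :\: c2)%MS.
apply: is_frame_of; rewrite ?nz_row_sub ?diffmxSl //.
- by rewrite nz_row_eq0 -mxrank_eq0 rW.
- by apply: (notsub_capmx0 (A := c2)) c2_0; rewrite // capmxC capmx_diff.
- by rewrite -[in RHS](mxrank_capH_hyperplane rK1 WK1) -rN addnA.
Qed.

Lemma frame_through_hyperplane c0 K1 :
  \rank K1 = n.-1 -> ~~ (W <= K1)%MS -> (c0 <= K1)%MS -> ~~ (c0 <= Hm)%MS ->
  exists c1 c2 N, is_frame c0 c1 c2 N /\ (K1 == c0 + (c2 + N))%MS.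
Proof.
move=> rK1 WK1 c0K1 c0H; set c2 := nz_row (Hm :&: K1)%MS.
have c2_0 : c2 != 0 by rewrite nz_row_eq0 capH_hyperplane_neq0.
have [c1 [N frK1]] := frame_through_hyperplane_point rK1 WK1 c0K1 c0H (nz_row_sub _) c2_0.
by exists c1, c2, N.
Qed.

Lemma frame_through_point c0 : ~~ (c0 <= Hm)%MS -> exists c1 c2 N, is_frame c0 c1 c2 N.
Proof.
move=> c0H; have /hyperplane_throughP[rK1 WK1 c0K1] : ~~ (W <= c0)%MS.
  have r_c0 := rank_rV_notsub c0H; apply: contra c0H => Wc0.
  by rewrite -(rank1_eqmx Wc0 _ r_c0) // -mxrank_eq0 rW.
by have [c1 [c2 [N []]]] := frame_through_hyperplane rK1 WK1 c0K1 c0H; exists c1, c2, N.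
Qed.

Lemma frame_through_hyperplanes c0 K1 c2 K3 :
  \rank K1 = n.-1 -> ~~ (W <= K1)%MS -> (c0 <= K1)%MS -> ~~ (c0 <= Hm)%MS ->
  (c2 <= Hm :&: K1)%MS ->
  \rank K3 = n.-1 -> ~~ (W <= K3)%MS -> ~~ (c0 <= K3)%MS -> ((c0 + c2)%R <= K3)%MS ->
  exists c1 N, [/\ is_frame c0 c1 c2 N, (K1 == c0 + (c2 + N))%MS,
     (K3 == (c0 + c1)%R + ((c0 + c2)%R + N))%MS & ((c0 + W) :&: K3 == (c0 + c1)%R)%MS].
Proof.
move=> rK1 WK1 c0K1 c0H c2HK1 rK3 WK3 c0K3 c02K3.
have [c2H c2K1] : (c2 <= Hm)%MS /\ (c2 <= K1)%MS by rewrite !(submx_trans c2HK1) ?capmxSl ?capmxSr.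
have c2K3 : ~~ (c2 <= K3)%MS by apply: contra c0K3 => c2K3; rewrite -(submxDr _ c2K3) addrC.
have [c1 c1W eqc01] := line_meets_hyperplane c0H rK3 WK3.
have c01K3 : ((c0 + c1)%R <= K3)%MS by rewrite -eqc01 capmxSr.
have c1_0 : c1 != 0 by apply: contraNneq c0K3 => c1_0; move: c01K3; rewrite c1_0 addr0.
have c1K1 : ~~ (c1 <= K1)%MS by apply: contra WK1 => c1K1; rewrite -(rank1_eqmx c1W c1_0 rW).
have HK1K3 : ~~ (Hm :&: K1 <= K3)%MS by apply: contra c2K3; apply: submx_trans.
set N := (Hm :&: K1 :&: K3)%MS.
have rN : (3 + \rank N)%N = n.
  rewrite mxrank_cap_hyperplane // -[in RHS](mxrank_capH_hyperplane rK1 WK1) add2n add3n prednK //.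
  by rewrite lt0n mxrank_eq0 capH_hyperplane_neq0.
have [NHK1 NK3] : (N <= Hm :&: K1)%MS /\ (N <= K3)%MS by rewrite capmxSl capmxSr.
have NK1 : (N <= K1)%MS := submx_trans NHK1 (capmxSr _ _).
have [fr eqK1] := is_frame_of rK1 WK1 c0K1 c0H c1W c1_0 c2HK1
  (contra (fun c2N => submx_trans c2N NK3) c2K3) NHK1 rN.
exists c1, N; split=> //; last exact/eqmxP.
have c02N : ~~ ((c0 + c2)%R <= N)%MS.
  apply: contra c0H => c02N; rewrite -(submxDr _ c2H) addrC.
  exact: submx_trans c02N (submx_trans NHK1 (capmxSl _ _)).
have c01_c02N : ~~ ((c0 + c1)%R <= (c0 + c2)%R + N)%MS.
  apply: contra c1K1 => c01; rewrite -(submxDr _ c0K1); apply: submx_trans c01 _.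
  by rewrite addsmx_sub NK1 addmx_sub.
apply/eqmxP/eqmx_sym/eqmxP/eqmx_sub_rank; first by rewrite !addsmx_sub c01K3 c02K3.
by rewrite !mxrank_adds_row // rK3 -[X in (X.-1 <= _)%N]rN.
Qed.

Definition is_point (v : vertex) : bool := if val v is inl _ then true else false.

Lemma is_pointP (v : vertex) : is_point v -> exists p, val v = inl p.
Proof. by rewrite /is_point; case: (val v) => // p; exists p. Qed.

Lemma is_pointPn (v : vertex) : ~~ is_point v -> exists K, val v = inr K.
Proof. by rewrite /is_point; case: (val v) => // K; exists K. Qed.

Lemma adj_is_point (u v : vertex) : adj u v -> is_point v = ~~ is_point u.
Proof. by rewrite /Gamma_adj /is_point; case: (val u) (val v) => [p|K] [q|L]. Qed.

Lemma path_is_point x s : path adj x s -> is_point (last x s) = is_point x (+) odd (size s).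
Proof.
elim: s x => [|y s IHs] x /=; first by rewrite addbF.
by case/andP=> /adj_is_point xy /IHs ->; rewrite xy addNb addbN.
Qed.

Lemma geodesic_point_size x s : is_point x -> geodesic adj x s -> (size s <= 4)%N.
Proof.
move=> px geo; rewrite leqNgt; apply/negP=> s_gt4.
have [path5 short5] := geodesic_take 5 geo.
have size5 : size (take 5 s) = 5%N by rewrite size_takel.
have [K eK] : exists K, val (last x (take 5 s)) = inr K.
  by apply: is_pointPn; rewrite (path_is_point path5) px size5.
have [p ex] := is_pointP px; have [c0 pc0 _] := vertex_pointP ex; rewrite pc0 in ex.
by apply: (short5 3%N); [rewrite size5 | exact: walk_len3_point_hyperplane ex eK].
Qed.

Lemma vertex_point_rep (v : vertex) p c : val v = inl p -> ~~ (c <= Hm)%MS ->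
  exists2 u, p = <<u>>%MS & ((u - c)%R <= Hm)%MS.
Proof.
move=> vp cH; have [sp rp pH] := vertex_point vp.
have [u up ucH] := exists_rep_modH c pH; exists u => //.
have u0 : u != 0 by apply: contraNneq cH => u0; rewrite -eqmx_opp -sub0r -u0.
by apply: is_subspace_genmxE sp _; apply/eqmxP/eqmx_sym/rank1_eqmx.
Qed.

Lemma geodesic_fourth_point (x x1 x2 x3 x4 : vertex) c0 p4 :
  val x = inl <<c0>>%MS -> val x4 = inl p4 -> geodesic adj x [:: x1; x2; x3; x4] ->
  (p4 <= c0 + W)%MS.
Proof.
move=> xc0 x4p4 [_ short]; have [_ _] := vertex_point xc0; rewrite genmxE => c0H.
have [v p4v _] := vertex_pointP x4p4; rewrite p4v in x4p4 *; rewrite genmxE.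
apply: contraTT (notsubW_adds (rank_rV_notsub c0H) c0H) _; apply/negPn/negP => Wc0v.
exact: (short 2%N isT (walk_len2_points xc0 x4p4 Wc0v)).
Qed.

Lemma geodesic_second_point (x x1 x2 : vertex) s c0 :
  val x = inl <<c0>>%MS -> geodesic adj x [:: x1, x2 & s] ->
  exists K1 c2, [/\ val x1 = inr K1, val x2 = inl <<(c0 + c2)%R>>%MS,
                    (c0 <= K1)%MS & (c2 <= Hm :&: K1)%MS].
Proof.
move=> xc0 [/and3P[x_x1 x1_x2 _] _]; have [_ _] := vertex_point xc0; rewrite genmxE => c0H.
have [K1 x1K1] := adj_point x_x1 xc0; rewrite genmxE => c0K1.
have [p2 x2p2 p2K1] := adj_hyperplane x1_x2 x1K1.
have [u p2u uc0H] := vertex_point_rep x2p2 c0H.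
exists K1, (u - c0)%R; split=> //; first by rewrite x2p2 p2u addrC subrK.
by rewrite sub_capmx uc0H submxBr //; move: p2K1; rewrite p2u genmxE.
Qed.

Lemma geodesic_point_frame (x : vertex) s c0 : val x = inl <<c0>>%MS -> geodesic adj x s ->
  exists c1 c2 N, is_frame c0 c1 c2 N /\ map val s = take (size s) (frame_path c0 c1 c2 N).
Proof.
move=> xc0 geo; have [_ _] := vertex_point xc0; rewrite genmxE => c0H.
have s_le4 : (size s <= 4)%N by apply: geodesic_point_size geo; rewrite /is_point xc0.
case: s => [|x1 [|x2 s]] in geo s_le4 *.
- by have [c1 [c2 [N fr]]] := frame_through_point c0H; exists c1, c2, N.
- have [/andP[x_x1 _] _] := geo; have [K1 x1K1] := adj_point x_x1 xc0; rewrite genmxE => c0K1.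
  have [sK1 rK1 WK1] := vertex_hyperplane x1K1.
  have [c1 [c2 [N [fr eqK1]]]] := frame_through_hyperplane rK1 WK1 c0K1 c0H.
  by exists c1, c2, N; rewrite /= x1K1 (is_subspace_genmxE sK1 eqK1).
have [K1 [c2 [x1K1 x2c02 c0K1 c2HK1]]] := geodesic_second_point xc0 geo.
have [sK1 rK1 WK1] := vertex_hyperplane x1K1.
case: s => [|x3 s] in geo s_le4 *.
  have c2_0 : c2 != 0.
    have := geodesic_last_neq geo isT; apply: contraNneq => c2_0.
    by apply/eqP/val_inj; rewrite /= x2c02 xc0 c2_0 addr0.
  have [c1 [N [fr eqK1]]] := frame_through_hyperplane_point rK1 WK1 c0K1 c0H c2HK1 c2_0.
  by exists c1, c2, N; rewrite /= x1K1 x2c02 (is_subspace_genmxE sK1 eqK1).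
have [/and4P[_ _ x2_x3 _] _] := geo; have [K3 x3K3] := adj_point x2_x3 x2c02.
rewrite genmxE => c02K3; have [sK3 rK3 WK3] := vertex_hyperplane x3K3.
have c0K3 : ~~ (c0 <= K3)%MS.
  have := geodesic_last_nadj (geodesic_take 3 geo) isT.
  by rewrite /= take0 /= /Gamma_adj xc0 x3K3 /= genmxE.
have [c1 [N [fr eqK1 eqK3 eq_line]]] :=
  frame_through_hyperplanes rK1 WK1 c0K1 c0H c2HK1 rK3 WK3 c0K3 c02K3.
exists c1, c2, N; split=> //.
rewrite /= x1K1 x2c02 x3K3 (is_subspace_genmxE sK1 eqK1) (is_subspace_genmxE sK3 eqK3).
case: s => [|x4 [|x5 s]] in geo s_le4 * => //=.
have [/and5P[_ _ _ x3_x4 _] _] := geo; have [p4 x4p4 p4K3] := adj_hyperplane x3_x4 x3K3.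
have [sp4 rp4 _] := vertex_point x4p4.
have p4_c01 : (p4 <= (c0 + c1)%R)%MS.
  by rewrite -(eqmxP eq_line) sub_capmx p4K3 (geodesic_fourth_point xc0 x4p4 geo).
rewrite x4p4 (is_subspace_genmxE sp4 (_ : p4 == (c0 + c1)%R)%MS) //.
by apply: eqmx_sub_rank; rewrite ?rp4 ?rank_leq_row.
Qed.

Lemma point_geodesic_transitive (x y : vertex) s t :
  is_point x -> is_point y -> size s = size t -> geodesic adj x s -> geodesic adj y t ->
  exists g : {perm vertex}, [/\ graph_aut adj g, g x = y & map g s = t].
Proof.
move=> /is_pointP[p xp] /is_pointP[q yq] st geo_s geo_t.
have [c0 pc0 _] := vertex_pointP xp; have [d0 qd0 _] := vertex_pointP yq.
rewrite pc0 in xp; rewrite qd0 in yq.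
have [c1 [c2 [N [fr s_path]]]] := geodesic_point_frame xp geo_s.
have [d1 [d2 [M [fr' t_path]]]] := geodesic_point_frame yq geo_t.
have [g [gU gW gH c0g path_g]] := frame_transport fr fr'.
exists (collineation_perm gU gW gH); split; first exact: collineation_perm_aut.
  by apply: val_inj; rewrite collineation_permE xp yq /= genmx_mulmx c0g.
apply: (inj_map val_inj); rewrite -map_comp (@eq_map _ _ _ (collineation g \o val)).
  by rewrite map_comp s_path map_take path_g t_path st.
by move=> v; rewrite /= collineation_permE.
Qed.

Lemma exists_aut_to_point (x : vertex) :
  exists2 g : {perm vertex}, graph_aut adj g & is_point (g x).
Proof.
case px: (is_point x); first by exists 1%g; [move=> u v; rewrite !perm1 | rewrite perm1].
have [K xK] := is_pointPn (negbT px).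
have rHo : \rank (orthmx Hm) = 1%N by rewrite mxrank_orthmx rH; lia.
have rWo : \rank (orthmx W) = n.-1 by rewrite mxrank_orthmx rW subn1.
have [g [gU gW gH]] := unitmx_map_flag rHo rWo (orthmxS WH) rW rH WH.
exists (correlation_perm rW gU gW gH); first exact: correlation_perm_aut.
by rewrite /is_point correlation_permE xK.
Qed.

End Geometry.

Theorem proposition3p4 (F : finFieldType) (n : nat) (W Hm : 'M[F]_n) :
  (3 <= n)%N ->
  \rank W = 1%N -> \rank Hm = n.-1 -> (W <= Hm)%MS ->
  geodesic_transitive (@Gamma_adj F n W Hm).
Proof.
move=> n_ge3 rW rH WH; apply: (geodesic_transitive_from (P := @is_point F n W Hm)).
  exact: exists_aut_to_point.
by move=> x s y t; apply: point_geodesic_transitive.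
Qed.
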